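(* Let $(V,\langle\cdot,\cdot\rangle)$ be a pseudo-Euclidean real vector space of signature $(k,l)$ with $k\ge2$, $l\ge2$, let $Z\subseteq V$ be a subspace with $q^+(Z)\ge1$, and let $H\subseteq V$ be a positive $(k-1)$-plane, so that $V=H\oplus H^\perp$ with $H^\perp$ Minkowski of signature $(1,l)$. Let $\pi^{H^\perp}:V\to H^\perp$ be the projection along $H$, and let $C^+(H^\perp)$ be either one of the two connected components of $\{w\in H^\perp:\langle w,w\rangle\ge0\}\setminus\{0\}$. The following are equivalent: (i) $H$ is $Z$-orthogonally-extendable; (ii) $q^+(Z\cap H^\perp)\ge1$; (iii) $\pi^{H^\perp}(Z^\perp)\cap C^+(H^\perp)=\emptyset$.
   Context: A pseudo-Euclidean space of signature $(k,l)$ is a finite-dimensional real vector space with a symmetric non-degenerate bilinear form whose Sylvester diagonal form has $k$ entries $+1$ and $l$ entries $-1$. For a subspace $L$, $q^+(L)$ denotes the number of $+1$'s in a diagonalization of the restriction of the form to $L$, and $L^\perp$ is the orthogonal complement in $V$. A positive $r$-plane is an $r$-dimensional subspace on which the form is positive definite. $H$ is $Z$-orthogonally-extendable if there is $z\in Z\cap H^\perp$ with $H+\mathbb{R}z$ a positive $k$-plane. *)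

From HB Require Import structures.
From mathcomp Require Import all_boot all_order all_algebra.
Set Implicit Arguments. Unset Strict Implicit. Unset Printing Implicit Defensive.
Import Order.TTheory GRing.Theory Num.Theory.
Local Open Scope ring_scope.

Section Defs.
Variable R : realFieldType.

(* Dedekind/sup completeness: together with realFieldType this pins R down
   as (an isomorphic copy of) the real numbers. *)
Definition sup_complete : Prop :=
  forall A : R -> Prop, (exists x, A x) -> (exists M, forall x, A x -> x <= M) ->
  exists s, (forall x, A x -> x <= s) /\
            (forall M, (forall x, A x -> x <= M) -> s <= M).

Variable n : nat.
Definition bform (B : 'M[R]_n) (u v : 'rV[R]_n) : R := (u *m B *m v^T) 0 0.

Definition sylvester_diag r (D : 'M[R]_r) (p q : nat) : Prop :=
  is_diag_mx D /\ (forall i, D i i = 1 \/ D i i = -1 \/ D i i = 0) /\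
  #|[set i | D i i == 1]| = p /\ #|[set i | D i i == -1]| = q.

(* The restriction of the form to the subspace (row space of) L has a
   Sylvester diagonalization with p entries +1 and q entries -1:
   P is a basis of L (rows of P), and P B P^T is the Gram matrix. *)
Definition sylvester_form (B : 'M[R]_n) m (L : 'M[R]_(m, n)) (p q : nat) : Prop :=
  exists P : 'M[R]_(\rank L, n), (P == L)%MS /\ sylvester_diag (P *m B *m P^T) p q.

Definition qplus_is (B : 'M[R]_n) m (L : 'M[R]_(m, n)) (p : nat) : Prop :=
  exists q, sylvester_form B L p q.

Definition qplus_ge1 (B : 'M[R]_n) m (L : 'M[R]_(m, n)) : Prop :=
  exists p, qplus_is B L p /\ (1 <= p)%N.

Definition pseudo_euclidean (B : 'M[R]_n) (k l : nat) : Prop :=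
  B^T = B /\ B \in unitmx /\ sylvester_form B (1%:M : 'M[R]_n) k l.

Definition perp (B : 'M[R]_n) m (L : 'M[R]_(m, n)) : 'M[R]_n := kermx (B *m L^T).

Definition positive_plane (B : 'M[R]_n) m (L : 'M[R]_(m, n)) (r : nat) : Prop :=
  \rank L = r /\ forall u : 'rV[R]_n, (u <= L)%MS -> u != 0 -> 0 < bform B u u.

Definition orth_extendable (B : 'M[R]_n) (k : nat) (Z H : 'M[R]_n) : Prop :=
  exists z : 'rV[R]_n, (z <= Z :&: perp B H)%MS /\ positive_plane B (H + z)%MS k.

Definition lightcone (B : 'M[R]_n) (W : 'M[R]_n) : 'rV[R]_n -> Prop :=
  fun w => (w <= W)%MS /\ 0 <= bform B w w /\ w != 0.

Definition open_set (U : 'rV[R]_n -> Prop) : Prop :=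
  forall x, U x -> exists2 e : R, 0 < e &
    forall y : 'rV[R]_n, (forall i, `|y 0 i - x 0 i| < e) -> U y.

Definition connected_set (S : 'rV[R]_n -> Prop) : Prop :=
  forall U1 U2, open_set U1 -> open_set U2 ->
    (forall x, S x -> U1 x \/ U2 x) ->
    (forall x, ~ (S x /\ U1 x /\ U2 x)) ->
    (exists x, S x /\ U1 x) -> (exists x, S x /\ U2 x) -> False.

Definition connected_component (S C : 'rV[R]_n -> Prop) : Prop :=
  (exists x, C x) /\ (forall x, C x -> S x) /\ connected_set C /\
  (forall D, connected_set D -> (forall x, D x -> S x) ->
     (exists x, D x /\ C x) -> forall x, D x -> C x).

End Defs.

(* Since H is a positive (k-1)-plane, the form on H^perp is Lorentzian: H^perp
   contains positive vectors but no two orthogonal ones, so a positive vector of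
   H^perp is orthogonal to no vector of the light cone C(H^perp).  Hence a vector z
   extends H to a positive k-plane exactly when z is a positive vector of
   Z :&: H^perp, which is (i) <-> (ii).  If z is such a vector and v is in Z^perp,
   then z is orthogonal to v and to v - pi(v), which lies in H, so pi(v) is not in
   the light cone: (ii) -> (iii).  Conversely, if the form is negative
   semidefinite on M = Z :&: H^perp, then H^perp :&: M^perp contains a nonzero
   vector w of the light cone: an isotropic vector of M, or else the component
   orthogonal to the negative definite M of a positive vector of H^perp.  The
   projection pi maps Z^perp onto H^perp :&: M^perp, and the light cone is the
   union of two star-shaped, hence connected, nappes exchanged by w |-> -w, so w
   or -w lies in the component C, contradicting (iii). *)

From HB Require Import structures.
From mathcomp Require Import all_boot all_order all_algebra.
From mathcomp Require Import ring lra zify.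
From Stdlib Require Import Classical.
Import Order.TTheory GRing.Theory Num.Theory.
Local Open Scope ring_scope.
Set Implicit Arguments. Unset Strict Implicit. Unset Printing Implicit Defensive.

Section SupComplete.
Variable R : realFieldType.
Hypothesis hR : sup_complete R.

Lemma sup_complete_sqrt (x : R) : 0 <= x -> exists2 r, 0 <= r & r * r = x.
Proof.
move=> x0.
have [s [s_ub s_least]] : exists s, (forall y, 0 <= y /\ y * y <= x -> y <= s) /\
    (forall M, (forall y, 0 <= y /\ y * y <= x -> y <= M) -> s <= M).
  apply: hR; first by exists 0; rewrite mulr0.
  exists (x + 1) => y [y0 yy]; rewrite leNgt; apply/negP => hy.
  have : (x + 1) * (x + 1) < y * y by apply: ltr_pM => //; lra.
  nra.
have s0 : 0 <= s by apply: s_ub; rewrite mulr0.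
exists s => //; case: (ltgtP (s * s) x) => // hs.
- pose d := Num.min 1 ((x - s * s) / (2 * s + 1)).
  have d0 : 0 < d by rewrite lt_min ltr01 /=; apply: divr_gt0; lra.
  have d1 : d <= 1 by rewrite ge_min lexx.
  have d2 : d * (2 * s + 1) <= x - s * s.
    by rewrite -ler_pdivlMr ?ge_min ?lexx ?orbT //; lra.
  suff : s + d <= s by lra.
  by apply: s_ub; split; [lra | nra].
- have s_gt0 : 0 < s by rewrite lt_neqAle s0 andbT; apply: contraTneq hs => <-; lra.
  pose d := (s * s - x) / (2 * s).
  have d0 : 0 < d by apply: divr_gt0; lra.
  have dd : d * (2 * s) = s * s - x by rewrite /d mulfVK //; lra.
  suff : s <= s - d by lra.
  apply: s_least => y [y0 yy]; rewrite leNgt; apply/negP => hy.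
  have : (s - d) * (s - d) < y * y by apply: ltr_pM => //; nra.
  nra.
Qed.

End SupComplete.

Section BilinearForm.
Variable R : realFieldType.
Variable n : nat.
Variable B : 'M[R]_n.
Hypothesis Bsym : B^T = B.

Local Notation bf := (bform B).

Lemma bformDl u v w : bf (u + v) w = bf u w + bf v w.
Proof. by rewrite /bform !mulmxDl mxE. Qed.
Lemma bformDr u v w : bf w (u + v) = bf w u + bf w v.
Proof. by rewrite /bform linearD /= mulmxDr mxE. Qed.
Lemma bformZl a u w : bf (a *: u) w = a * bf u w.
Proof. by rewrite /bform -!scalemxAl mxE. Qed.
Lemma bformZr a u w : bf w (a *: u) = a * bf w u.
Proof. by rewrite /bform linearZ /= -scalemxAr mxE. Qed.
Lemma bformNl u w : bf (- u) w = - bf u w.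
Proof. by rewrite -scaleN1r bformZl mulN1r. Qed.
Lemma bformNr u w : bf w (- u) = - bf w u.
Proof. by rewrite -scaleN1r bformZr mulN1r. Qed.
Lemma bformBl u v w : bf (u - v) w = bf u w - bf v w.
Proof. by rewrite bformDl bformNl. Qed.
Lemma bformBr u v w : bf w (u - v) = bf w u - bf w v.
Proof. by rewrite bformDr bformNr. Qed.
Lemma bform0l w : bf 0 w = 0.
Proof. by rewrite /bform !mul0mx mxE. Qed.

Lemma bformC u v : bf u v = bf v u.
Proof.
have e : (v *m B *m u^T)^T = u *m B *m v^T by rewrite !trmx_mul trmxK Bsym mulmxA.
by rewrite /bform -e mxE.
Qed.

Lemma bform_gt0_neq0 u : 0 < bf u u -> u != 0.
Proof. by apply: contraTneq => ->; rewrite bform0l ltxx. Qed.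

Lemma gram_mxE m1 m2 (X : 'M_(m1, n)) (Y : 'M_(m2, n)) i j :
  (X *m B *m Y^T) i j = bf (row i X) (row j Y).
Proof. by rewrite /bform tr_row colE !mulmxA -!row_mul -colE !mxE. Qed.

Lemma bform_perpl m (L : 'M_(m, n)) u v :
  (u <= perp B L)%MS -> (v <= L)%MS -> bf u v = 0.
Proof.
rewrite /perp sub_kermx => /eqP uBL /submxP [x ->].
by rewrite /bform trmx_mul !mulmxA -(mulmxA u) uBL mul0mx mxE.
Qed.

Lemma bform_perpr m (L : 'M_(m, n)) u v :
  (u <= L)%MS -> (v <= perp B L)%MS -> bf u v = 0.
Proof. by move=> uL vL; rewrite bformC (bform_perpl vL uL). Qed.

Lemma sub_perpP m (L : 'M_(m, n)) u :
  reflect (forall v, (v <= L)%MS -> bf u v = 0) (u <= perp B L)%MS.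
Proof.
apply: (iffP idP) => [uL v|u_orth]; first exact: bform_perpl.
rewrite /perp sub_kermx; apply/eqP/matrixP => i j.
rewrite ord1 [RHS]mxE -(u_orth (row j L) (row_sub _ _)) bformC /bform.
transitivity ((u *m (B *m L^T))^T j 0); first by rewrite [RHS]mxE.
by rewrite !trmx_mul trmxK Bsym -!row_mul [RHS]mxE.
Qed.

Definition posdef m (U : 'M[R]_(m, n)) :=
  forall u, (u <= U)%MS -> u != 0 -> 0 < bf u u.

Lemma posdef_line z : 0 < bf z z -> posdef z.
Proof.
move=> zz u /sub_rVP [a ->] az0.
have a0 : a != 0 by apply: contraNneq az0 => ->; rewrite scale0r.
by rewrite bformZl bformZr mulrA mulr_gt0 // -expr2 exprn_even_gt0.
Qed.

Lemma capmx_eq0 m1 m2 (X : 'M_(m1, n)) (Y : 'M_(m2, n)) :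
  (forall u : 'rV[R]_n, (u <= X)%MS -> (u <= Y)%MS -> u = 0) -> (X :&: Y)%MS = 0 :> 'M_n.
Proof. by move=> XY0; apply/eqP/rowV0P => v; rewrite sub_capmx => /andP [] /XY0. Qed.

Lemma posdef_addsmx m1 m2 (X : 'M_(m1, n)) (Y : 'M_(m2, n)) :
  posdef X -> posdef Y -> (forall x y, (x <= X)%MS -> (y <= Y)%MS -> bf x y = 0) ->
  posdef (X + Y)%MS /\ \rank (X + Y)%MS = (\rank X + \rank Y)%N.
Proof.
move=> Xpd Ypd XY; split.
  move=> _ /sub_addsmxP [[a b] /= ->].
  have [xX yY] : (a *m X <= X)%MS /\ (b *m Y <= Y)%MS by split; apply: submxMl.
  move: (a *m X) (b *m Y) xX yY => x y xX yY xy0.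
  rewrite bformDl !bformDr (XY _ _ xX yY) (bformC y x) (XY _ _ xX yY) add0r addr0.
  have [x0 | x0] := eqVneq x 0.
    by rewrite x0 add0r in xy0 *; rewrite bform0l add0r Ypd.
  have [y0 | y0] := eqVneq y 0.
    by rewrite y0 addr0 in xy0 *; rewrite bform0l addr0 Xpd.
  by apply: addr_gt0; [apply: Xpd | apply: Ypd].
apply/mxrank_disjoint_sum/capmx_eq0 => u uX uY; apply/eqP; apply: contraT => u0.
by have := Xpd u uX u0; rewrite (XY _ _ uX uY) ltxx.
Qed.

Lemma isotropic_perturb w y : bf w w = 0 -> bf w y != 0 ->
  exists t, 0 < bf (w + t *: y) (w + t *: y).
Proof.
move=> ww wy; set b := bf w y; set c := bf y y.
pose s := (1 + `|c|)^-1.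
have c_ge : - `|c| <= c by rewrite lerNnormlW.
have s0 : 0 < s by rewrite invr_gt0; have := normr_ge0 c; lra.
have s1 : s * (1 + `|c|) = 1 by rewrite mulVf //; have := normr_ge0 c; lra.
have sc : 0 <= s * `|c| by rewrite mulr_ge0 ?normr_ge0 // ltW.
have b2 : 0 < b * b by rewrite -expr2 exprn_even_gt0.
have sc2 : 0 < 2 + s * c by nra.
exists (s * b); rewrite !bformDl !bformDr !bformZl !bformZr ww (bformC y w) -/b -/c add0r.
have -> : s * b * b + (s * b * b + s * b * (s * b * c)) = s * (b * b) * (2 + s * c) by ring.
by apply: mulr_gt0 => //; apply: mulr_gt0.
Qed.

Lemma nonpos_isotropic_perp m (M : 'M[R]_(m, n)) u :
  (forall v, (v <= M)%MS -> bf v v <= 0) -> (u <= M)%MS -> bf u u = 0 ->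
  (u <= perp B M)%MS.
Proof.
move=> Mnpos uM uu; apply/sub_perpP => v vM.
set b := bf u v; set c := bf v v.
have c0 : c <= 0 by apply: Mnpos.
set t := b / (1 - c).
have tc : t * (1 - c) = b by rewrite /t mulfVK // lt0r_neq0 //; lra.
have : bf (u + t *: v) (u + t *: v) <= 0 by rewrite Mnpos ?addmx_sub ?scalemx_sub.
rewrite !bformDl !bformDr !bformZl !bformZr uu -/c (bformC v u) -/b add0r => tv.
have : b * b * (2 - c) <= 0.
  have -> : b * b * (2 - c) = (1 - c) * (1 - c) * (t * b + (t * b + t * (t * c))).
    by rewrite -tc; ring.
  by rewrite mulr_ge0_le0 // mulr_ge0 //; lra.
move=> bbc; have /eqP : b * b = 0 by nra.
by rewrite mulf_eq0 orbb => /eqP.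
Qed.

End BilinearForm.

Section DiagonalForm.
Variable R : realFieldType.

Definition sign_row m (d : 'rV[R]_m) := forall i, d 0 i = 1 \/ d 0 i = -1 \/ d 0 i = 0.

Lemma sign_row_mx m1 m2 (a : 'rV[R]_m1) (b : 'rV[R]_m2) :
  sign_row a -> sign_row b -> sign_row (row_mx a b).
Proof.
move=> ha hb i; case: (splitP i) => j ij.
  by rewrite (_ : i = lshift m2 j) ?row_mxEl //; apply: ord_inj.
by rewrite (_ : i = rshift m1 j) ?row_mxEr //; apply: ord_inj.
Qed.

Lemma diag_form_le0 m (d x : 'rV[R]_m) :
  sign_row d -> (forall i, d 0 i = 1 -> x 0 i = 0) -> (x *m diag_mx d *m x^T) 0 0 <= 0.
Proof.
move=> d_sign x0; rewrite mul_mx_diag mxE sumr_le0 // => i _; rewrite !mxE.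
case: (d_sign i) => [/x0 -> | [-> | ->]]; rewrite ?mulr0 ?mul0r //.
by rewrite mulrN1 mulNr oppr_le0 -expr2 sqr_ge0.
Qed.

End DiagonalForm.

Lemma row_space_in_rows (F : fieldType) r m n (X : 'M[F]_(m, n)) :
  (\rank X <= r)%N -> exists Y : 'M_(r, n), (Y == X)%MS.
Proof.
move=> rX; exists (castmx (subnKC rX, erefl n) (col_mx (row_base X) 0)).
apply/eqmxP; apply: eqmx_trans (eqmx_cast _ _) _.
apply: eqmx_trans (eqmx_sym (addsmxE _ _)) _.
exact: eqmx_trans (addsmx0 _ _) (eq_row_base X).
Qed.

Section Sylvester.
Variable R : realFieldType.
Hypothesis hR : sup_complete R.
Variable n : nat.
Variable B : 'M[R]_n.
Hypothesis Bsym : B^T = B.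

Local Notation bf := (bform B).

Lemma isotropic_gram m (A : 'M[R]_(m, n)) :
  (forall u, (u <= A)%MS -> bf u u = 0) -> A *m B *m A^T = 0.
Proof.
move=> A_iso; apply/matrixP => i j; rewrite gram_mxE mxE.
have [iA jA] : (row i A <= A)%MS /\ (row j A <= A)%MS by split; apply: row_sub.
have := A_iso _ (addmx_sub iA jA).
rewrite bformDl !bformDr !A_iso // (bformC Bsym (row j A)) add0r addr0 -mulr2n.
by move/eqP; rewrite mulrn_eq0 => /eqP.
Qed.

Lemma anisotropic_unit m (A : 'M[R]_(m, n)) u : (u <= A)%MS -> bf u u != 0 ->
  exists2 v, (v <= A)%MS & bf v v = 1 \/ bf v v = -1.
Proof.
move=> uA uu; have [t t0 tt] := sup_complete_sqrt hR (normr_ge0 (bf u u)).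
have t_neq0 : t != 0 by apply: contra_neq uu => t00; apply/eqP; rewrite -normr_eq0 -tt t00 mulr0.
exists (t^-1 *: u); first exact: scalemx_sub.
rewrite bformZl bformZr mulrA -invfM tt.
case: (ltrgtP 0 (bf u u)) => hu; last by rewrite -hu eqxx in uu.
- by left; rewrite gtr0_norm // mulVf // lt0r_neq0.
- by right; rewrite ltr0_norm // invrN mulNr mulVf // ltr0_neq0.
Qed.

Lemma gram_schmidt_step m (A : 'M[R]_(m.+1, n)) (u : 'rV[R]_n) (s : R) :
  (u <= A)%MS -> u *m B *m u^T = s%:M -> s != 0 ->
  exists A1 : 'M_(m.+1, n),
    [/\ (\rank A1 <= m)%N, A1 *m B *m u^T = 0 & (u + A1 :=: A)%MS].
Proof.
move=> uA uu s0; pose Au := A *m B *m u^T *m (s^-1 *: u); exists (A - Au).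
have u0 : u != 0.
  apply: contra_neq s0 => u0; move/matrixP/(_ 0 0): uu.
  by rewrite u0 !mul0mx !mxE eqxx mulr1n => <-.
set c := u *m pinvmx A; have cA : c *m A = u by rewrite mulmxKpV.
have Auu : (Au <= u)%MS by apply: submx_trans (submxMl _ _) (scalemx_sub _ _).
split.
- (* The rank drops: the coefficients of [u] in [A] annihilate [A - Au]. *)
  have : (c <= kermx (A - Au))%MS.
    rewrite sub_kermx /Au mulmxBr !mulmxA cA uu mul_scalar_mx scalerA mulfV //.
    by rewrite scale1r subrr.
  move/mxrankS; rewrite mxrank_ker rank_rV (_ : c != 0); last first.
    by apply: contra_neq u0 => c0; rewrite -cA c0 mul0mx.
  by have := rank_leq_row (A - Au); lia.
- rewrite /Au !mulmxBl -!mulmxA -scalemxAl (mulmxA u B) uu scale_scalar_mx.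
  by rewrite mulVf // mulmx1 subrr.
- apply/eqmxP; rewrite addsmx_sub uA addmx_sub ?eqmx_opp ?(submx_trans Auu uA) //=.
  by rewrite -{1}(subrK Au A) addrC addmx_sub_adds.
Qed.

Lemma sylvester_basis m (A : 'M[R]_(m, n)) :
  exists2 Q : 'M_(m, n), (Q == A)%MS &
    exists2 d : 'rV_m, Q *m B *m Q^T = diag_mx d & sign_row d.
Proof.
elim: m A => [|m IH] A.
  exists A; first exact/eqmxP.
  by exists 0; [apply/matrixP => [[]] | case].
case: (classic (exists2 u, (u <= A)%MS & bf u u != 0)) => [[u0 u0A u0u0] | A_iso].
  have [u uA us] := anisotropic_unit u0A u0u0.
  set s := bf u u in us; have uu : u *m B *m u^T = s%:M by rewrite [LHS]mx11_scalar.
  have s0 : s != 0 by case: us => ->; rewrite ?oppr_eq0 oner_eq0.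
  have [A1 [rA1 A1u uA1]] := gram_schmidt_step uA uu s0.
  have [A' A'A1] := row_space_in_rows rA1.
  have [Q' Q'A' [d' Q'd' d'_sign]] := IH A'.
  have Q'u : Q' *m B *m u^T = 0.
    have /submxP [D ->] : (Q' <= A1)%MS by rewrite (eqmxP Q'A') (eqmxP A'A1).
    by rewrite -!mulmxA (mulmxA A1) A1u mulmx0.
  have uQ' : u *m B *m Q'^T = 0.
    by have := congr1 trmx Q'u; rewrite !trmx_mul !trmxK Bsym trmx0 mulmxA.
  exists (col_mx u Q').
    apply/eqmxP; apply: eqmx_trans (eqmx_sym (addsmxE u Q')) (eqmx_trans _ uA1).
    exact: adds_eqmx (eqmx_refl u) (eqmx_trans (eqmxP Q'A') (eqmxP A'A1)).
  exists (row_mx (s%:M : 'rV_1) d'); last first.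
    apply: (@sign_row_mx _ 1 m) => // i; rewrite ord1 mxE /=.
    by case: us => ->; [left | right; left].
  change (@mulmx _ (1 + m) n (1 + m) (col_mx u Q' *m B) (col_mx u Q')^T
    = @diag_mx _ (1 + m) (row_mx (s%:M : 'rV_1) d')).
  rewrite diag_mx_row mul_col_mx tr_col_mx mul_col_row uu uQ' Q'u Q'd'.
  by congr block_mx; apply/matrixP => i j; rewrite !ord1 !mxE.
exists A; first exact/eqmxP.
exists 0; last by move=> i; rewrite mxE; right; right.
rewrite isotropic_gram ?linear0 // => u uA; apply/eqP.
by apply: contraT => uu; exfalso; apply: A_iso; exists u.
Qed.

Lemma qplus_ge1P p (L : 'M[R]_(p, n)) :
  qplus_ge1 B L <-> exists2 z, (z <= L)%MS & 0 < bf z z.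
Proof.
split=> [[p0 [[q [P [PL [_ [_ [P1 _]]]]]] p0_gt0]] | [z zL zz]].
  move: p0_gt0; rewrite -P1 => /card_gt0P [i]; rewrite inE => /eqP Pii.
  by exists (row i P); rewrite -?gram_mxE ?Pii ?ltr01 // -(eqmxP PL) row_sub.
have [Q QL [d Qd d_sign]] := sylvester_basis (row_base L).
have {}QL : (Q == L)%MS by apply/eqmxP; apply: eqmx_trans (eqmxP QL) (eq_row_base L).
have [i di] : exists i, d 0 i = 1.
  apply: NNPP => no_pos.
  have /submxP [x zx] : (z <= Q)%MS by rewrite (eqmxP QL).
  move: zz; rewrite zx /bform trmx_mul !mulmxA -(mulmxA x Q) -(mulmxA x) Qd.
  rewrite ltNge diag_form_le0 // => j dj.
  by case: no_pos; exists j.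
exists #|[set j | (Q *m B *m Q^T) j j == 1]|; split; last first.
  by apply/card_gt0P; exists i; rewrite inE Qd mxE eqxx mulr1n di.
exists #|[set j | (Q *m B *m Q^T) j j == -1]|, Q; split => //.
split; first by rewrite Qd diag_mx_is_diag.
by split => // j; rewrite Qd mxE eqxx mulr1n.
Qed.

End Sylvester.

Section Signature.
Variable R : realFieldType.
Variables n k l : nat.
Variable B : 'M[R]_n.
Hypothesis hB : pseudo_euclidean B k l.

(* [U] meets trivially the kernel of the coordinate projection onto the +1 entries
   of a Sylvester basis. *)
Lemma posdef_rank_le m (U : 'M[R]_(m, n)) : posdef B U -> (\rank U <= k)%N.
Proof.
case: hB => Bsym [_ [P [P1 [D_diag [D_sign [S_card _]]]]]] Upd.
move: D_diag D_sign S_card; set D := P *m B *m P^T => /diag_mxP [d Dd] D_sign.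
set S := [set i | D i i == 1] => S_card.
have Dii i : D i i = d 0 i by rewrite Dd mxE eqxx mulr1n.
pose Sel := \matrix_(i < \rank (1%:M : 'M[R]_n), j < #|S|) ((i == enum_val j)%:R : R).
pose F := pinvmx P *m Sel.
suff /capmx_eq0 UF0 : forall u : 'rV_n, (u <= U)%MS -> (u <= kermx F)%MS -> u = 0.
  by rewrite -S_card -(mxrank_mul_ker U F) UF0 mxrank0 addn0 rank_leq_col.
move=> u uU; rewrite sub_kermx => /eqP uF; apply/eqP; apply: contraT => u0.
have := Upd u uU u0.
set c := u *m pinvmx P; have cP : c *m P = u by rewrite mulmxKpV // (eqmxP P1) submx1.
rewrite -cP /bform trmx_mul !mulmxA -(mulmxA c P) -(mulmxA c) -/D Dd ltNge.
rewrite diag_form_le0 // => [i | i di]; first by rewrite -Dii.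
have iS : i \in S by rewrite inE Dii di.
have := congr1 (fun M : 'M[R]_(1, #|S|) => M 0 (enum_rank_in iS i)) uF.
rewrite /= /F mulmxA -/c mxE (bigD1 i) //= big1 ?addr0 => [|j ji].
  by rewrite !mxE enum_rankK_in // eqxx mulr1.
by rewrite [Sel _ _]mxE enum_rankK_in // (negbTE ji) mulr0.
Qed.

End Signature.

Section OrthProjection.
Variable R : realFieldType.
Variable n : nat.
Variable B : 'M[R]_n.
Hypothesis Bsym : B^T = B.

Local Notation bf := (bform B).

Lemma mxrank_perp m (L : 'M[R]_(m, n)) : B \in unitmx -> \rank (perp B L) = (n - \rank L)%N.
Proof.
move=> Bu; rewrite /perp mxrank_ker -mxrank_tr trmx_mul trmxK Bsym mxrankMfree //.
by rewrite row_free_unit.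
Qed.

Lemma negdef_orth_proj m (M : 'M[R]_(m, n)) (e : 'rV[R]_n) :
  (forall u, (u <= M)%MS -> u != 0 -> bf u u < 0) ->
  exists2 u, (u <= M)%MS & (e - u <= perp B M)%MS.
Proof.
move=> Mneg; set A := row_base M; have AM : (A :=: M)%MS := eq_row_base M.
set G := A *m B *m A^T.
have Gu : G \in unitmx.
  rewrite -row_free_unit -kermx_eq0; apply/rowV0P => x /sub_kermxP xG.
  apply: (row_free_inj (row_base_free M)); rewrite mul0mx.
  apply/eqP; apply: contraT => xA0.
  have xAM : (x *m A <= M)%MS by rewrite -AM submxMl.
  have := Mneg _ xAM xA0.
  have -> : bf (x *m A) (x *m A) = (x *m G *m x^T) 0 0 by rewrite /bform /G trmx_mul !mulmxA.
  by rewrite xG mul0mx mxE ltxx.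
exists (e *m B *m A^T *m invmx G *m A); first by rewrite -AM submxMl.
have eA : (e - e *m B *m A^T *m invmx G *m A <= perp B A)%MS.
  rewrite /perp sub_kermx mulmxBl -(mulmxA _ A) (mulmxA A B) -/G mulmxKV //.
  by rewrite mulmxA subrr.
by apply/sub_perpP => // v; rewrite -AM; apply: bform_perpl eA.
Qed.

End OrthProjection.

Section PerpOfPositivePlane.
Variable R : realFieldType.
Variables n k l : nat.
Variable B : 'M[R]_n.
Hypothesis hB : pseudo_euclidean B k l.
Hypothesis hk : (2 <= k)%N.
Variable H : 'M[R]_n.
Hypothesis hH : positive_plane B H k.-1.

Implicit Types (v w y z e : 'rV[R]_n).

Local Notation bf := (bform B).
Local Notation W := (perp B H).
Let Bsym : B^T = B. Proof. by case: hB. Qed.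
Let Bu : B \in unitmx. Proof. by case: hB => _ []. Qed.
Let Hpd : posdef B H. Proof. by case: hH. Qed.

Lemma capmx_perpH_H : (W :&: H)%MS = 0 :> 'M_n.
Proof.
apply: capmx_eq0 => u uW uH; apply/eqP; apply: contraT => u0.
by have := Hpd uH u0; rewrite (bform_perpl uW uH) ltxx.
Qed.

Lemma proj_perpH_compl v : (v - v *m proj_mx W H <= H)%MS.
Proof.
apply/proj_mx_compl_sub/submx_full.
rewrite /row_full mxrank_disjoint_sum ?capmx_perpH_H // mxrank_perp //.
by rewrite subnK // rank_leq_col.
Qed.

Lemma perpH_nondeg w : (w <= W)%MS -> w != 0 -> exists2 y, (y <= W)%MS & bf w y != 0.
Proof.
move=> wW w0; have /rV0Pn [j wBj] : w *m B != 0.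
  by apply: contra_neq w0 => wB0; rewrite -(mulmxK Bu w) wB0 mul0mx.
pose y : 'rV[R]_n := delta_mx 0 j.
have wy : bf w y = (w *m B) 0 j by rewrite /bform /y trmx_delta -colE mxE.
exists (y *m proj_mx W H); first exact: proj_mx_sub.
have : bf w (y - y *m proj_mx W H) = 0 by apply: bform_perpl wW (proj_perpH_compl y).
by rewrite bformBr wy => /eqP; rewrite subr_eq0 => /eqP <-.
Qed.

(* Otherwise H + z + w would be a positive (k+1)-plane. *)
Lemma perpH_pos_orth_pos z w : (z <= W)%MS -> (w <= W)%MS ->
  0 < bf z z -> 0 < bf w w -> bf z w != 0.
Proof.
move=> zW wW zz ww; apply/eqP => zw.
have [Hz_pd Hz_rk] := posdef_addsmx Bsym Hpd (posdef_line zz)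
   (fun x y xH yz => bform_perpr Bsym xH (submx_trans yz zW)).
have Hz_w : forall x y, (x <= H + z)%MS -> (y <= w)%MS -> bf x y = 0.
  move=> _ _ /sub_addsmxP [[a b] /= ->] /sub_rVP [c ->].
  rewrite bformDl bformZr (bform_perpr Bsym (submxMl _ _) wW) mulr0 add0r.
  by rewrite [b]mx11_scalar mul_scalar_mx bformZl bformZr zw !mulr0.
have [Hzw_pd Hzw_rk] := posdef_addsmx Bsym Hz_pd (posdef_line ww) Hz_w.
have := posdef_rank_le hB Hzw_pd.
rewrite Hzw_rk Hz_rk !rank_rV (bform_gt0_neq0 zz) (bform_gt0_neq0 ww) (proj1 hH).
by move: hk; lia.
Qed.

Lemma perpH_lightcone_pos w : lightcone B W w -> exists2 e, (e <= W)%MS & 0 < bf e e.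
Proof.
move=> [wW [ww w0]]; case: (ltrgtP 0 (bf w w)) => [w_pos | w_neg | w_iso].
- by exists w.
- by move: ww; rewrite leNgt w_neg.
have [y yW wy] := perpH_nondeg wW w0.
have [t wty] := isotropic_perturb Bsym (esym w_iso) wy.
by exists (w + t *: y) => //; apply: addmx_sub => //; apply: scalemx_sub.
Qed.

Lemma lightcone_orth_pos z w : (z <= W)%MS -> 0 < bf z z ->
  lightcone B W w -> bf z w != 0.
Proof.
move=> zW zz [wW [ww w0]]; apply/eqP => zw.
case: (ltrgtP 0 (bf w w)) => [w_pos | w_neg | w_iso].
- by move: (perpH_pos_orth_pos zW wW zz w_pos); rewrite zw eqxx.
- by move: ww; rewrite leNgt w_neg.
have [y yW wy] := perpH_nondeg wW w0.
(* Replace y by its component orthogonal to z and perturb the isotropic w. *)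
pose y' := y - (bf y z / bf z z) *: z.
have zz0 : bf z z != 0 by rewrite gt_eqF.
have wy' : bf w y' = bf w y by rewrite bformBr bformZr (bformC Bsym w z) zw mulr0 subr0.
have zy' : bf z y' = 0 by rewrite bformBr bformZr (bformC Bsym z) mulfVK // subrr.
rewrite -wy' in wy; have [t wty] := isotropic_perturb Bsym (esym w_iso) wy.
have wtyW : ((w + t *: y')%R <= W)%MS.
  apply: addmx_sub => //; apply: scalemx_sub; apply: addmx_sub => //.
  by rewrite eqmx_opp scalemx_sub.
move: (perpH_pos_orth_pos zW wtyW zz wty).
by rewrite bformDr bformZr zw zy' mulr0 addr0 eqxx.
Qed.

Lemma positive_plane_addsmx z : (z <= W)%MS -> 0 < bf z z -> positive_plane B (H + z)%MS k.
Proof.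
move=> zW zz; have [pd rk] := posdef_addsmx Bsym Hpd (posdef_line zz)
  (fun x y xH yz => bform_perpr Bsym xH (submx_trans yz zW)).
split=> //; rewrite rk rank_rV (bform_gt0_neq0 zz) (proj1 hH).
by move: hk; lia.
Qed.

Lemma positive_plane_addsmx_pos z :
  positive_plane B (H + z)%MS k -> 0 < bf z z.
Proof.
case=> rk pd; apply: pd; first exact: addsmxSr.
apply/eqP => z0; have : \rank H = k by rewrite -rk z0 addsmx0.
by rewrite (proj1 hH); move: hk; clear; lia.
Qed.

Lemma proj_perpH_onto (Z : 'M[R]_n) w : (w <= W)%MS -> (w <= perp B (Z :&: W))%MS ->
  exists2 v, (v <= perp B Z)%MS & v *m proj_mx W H = w.
Proof.
move=> wW wZW; set K := H *m B *m Z^T; set y := w *m B *m Z^T.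
(* [w] and some vector of [H] have the same products with [Z]; subtract it. *)
have /submxP [d yd] : (y <= K)%MS.
  rewrite submxE; set X := cokermx K; set Y := X^T *m Z.
  have YW : (Y <= W)%MS.
    rewrite /perp sub_kermx.
    have -> : Y *m (B *m H^T) = (K *m X)^T by rewrite /Y /K !trmx_mul trmxK Bsym !mulmxA.
    by rewrite mulmx_coker trmx0.
  move: wZW; rewrite /perp sub_kermx => /eqP wZW.
  have -> : y *m X = w *m B *m Y^T by rewrite /y /Y trmx_mul trmxK !mulmxA.
  have /submxP [D ->] : (Y <= Z :&: W)%MS by rewrite sub_capmx submxMl YW.
  by rewrite trmx_mul -!mulmxA (mulmxA B) (mulmxA w) wZW mul0mx.
exists (w - d *m H).
  by rewrite /perp sub_kermx mulmxBl -!mulmxA (mulmxA w) -/y yd /K !mulmxA subrr.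
rewrite mulmxBl (proj_mx_id capmx_perpH_H wW).
by rewrite (proj_mx_0 capmx_perpH_H (submxMl _ _)) subr0.
Qed.

Lemma perpH_nonpos_lightcone_perp (M : 'M[R]_n) e : (M <= W)%MS ->
  (forall v, (v <= M)%MS -> bf v v <= 0) -> (e <= W)%MS -> 0 < bf e e ->
  exists2 w, (w <= perp B M)%MS & lightcone B W w.
Proof.
move=> MW Mnpos eW ee.
case: (classic (exists u, [/\ (u <= M)%MS, u != 0 & bf u u = 0])).
  case=> u [uM u0 uu]; exists u; first exact: nonpos_isotropic_perp.
  by split; [apply: submx_trans MW | rewrite uu].
move=> M_aniso; have Mneg u : (u <= M)%MS -> u != 0 -> bf u u < 0.
  move=> uM u0; rewrite lt_neqAle Mnpos // andbT; apply/eqP => uu.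
  by apply: M_aniso; exists u.
have [u uM euM] := negdef_orth_proj Bsym e Mneg.
have e_u_pos : 0 < bf (e - u) (e - u).
  have eu_u : bf (e - u) u = 0 by apply: bform_perpl euM uM.
  have := Mneg u uM; have := Mnpos u uM.
  rewrite !bformBl !bformBr (bformC Bsym u e) in eu_u *; nra.
exists (e - u) => //; split.
  by apply: addmx_sub; rewrite ?eqmx_opp ?(submx_trans uM MW).
by rewrite ltW // (bform_gt0_neq0 e_u_pos).
Qed.

End PerpOfPositivePlane.

Section UnitIntervalConnected.
Variable R : realFieldType.
Hypothesis hR : sup_complete R.
Variables P1 P2 : R -> Prop.
Hypothesis P1_open : forall s, P1 s -> exists2 d, 0 < d & forall t, `|t - s| < d -> P1 t.
Hypothesis P2_open : forall s, P2 s -> exists2 d, 0 < d & forall t, `|t - s| < d -> P2 t.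
Hypothesis P12_cover : forall t, 0 <= t <= 1 -> P1 t \/ P2 t.
Hypothesis P12_disjoint : forall t, 0 <= t <= 1 -> P1 t -> P2 t -> False.
Hypothesis P1_0 : P1 0.
Hypothesis P2_1 : P2 1.

Definition P1_upto t := 0 <= t <= 1 /\ forall s, 0 <= s <= t -> P1 s.

Lemma P1_upto0 : P1_upto 0.
Proof.
split=> [|s /andP [s0 s_le0]]; first by rewrite lexx ler01.
by rewrite (_ : s = 0) //; apply/eqP; rewrite eq_le s0 s_le0.
Qed.

Section Supremum.
Variable sg : R.
Hypothesis sg_ub : forall t, P1_upto t -> t <= sg.
Hypothesis sg_least : forall M, (forall t, P1_upto t -> t <= M) -> sg <= M.

Lemma sup_P1_upto_ge0 : 0 <= sg.
Proof. exact: sg_ub P1_upto0. Qed.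

Lemma sup_P1_upto_le1 : sg <= 1.
Proof. by apply: sg_least => t [/andP []]. Qed.

Lemma sup_P1_upto_below s : s < sg -> exists2 t, P1_upto t & s < t.
Proof.
move=> s_lt; apply: NNPP => no_t; suff : sg <= s by lra.
by apply: sg_least => t P1t; rewrite leNgt; apply/negP => st; apply: no_t; exists t.
Qed.

Lemma sup_P1_upto_not_P1 : ~ P1 sg.
Proof.
move=> P1sg; have sg_lt1 : sg < 1.
  rewrite lt_neqAle sup_P1_upto_le1 andbT; apply/eqP => sg1.
  by apply: (@P12_disjoint 1); rewrite ?lexx ?ler01 // -sg1.
have [d d0 P1_near] := P1_open P1sg.
have d2 : 0 < d / 2 by rewrite divr_gt0.
pose t' := Num.min 1 (sg + d / 2).
suff /sg_ub : P1_upto t' by rewrite /t' ge_min leNgt sg_lt1 /= leNgt ltrDl d2.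
have sg_le := sup_P1_upto_ge0.
split=> [|s /andP [s0 s_le]]; first by rewrite ge_min lexx le_min ler01 /=; lra.
case: (ltP s sg) => [/sup_P1_upto_below [t [_ P1t] st] | sg_le_s].
  by apply: P1t; rewrite s0 ltW.
have : t' <= sg + d / 2 by rewrite ge_min lexx orbT.
by move=> t'_le; apply: P1_near; rewrite ger0_norm; lra.
Qed.

Lemma sup_P1_upto_not_P2 : ~ P2 sg.
Proof.
move=> P2sg; have sg_gt0 : 0 < sg.
  rewrite lt_neqAle sup_P1_upto_ge0 andbT; apply/eqP => sg0.
  by apply: (@P12_disjoint 0); rewrite ?lexx ?ler01 // sg0.
have [d d0 P2_near] := P2_open P2sg.
have [t [/andP [t0 t1] P1_upto_t] t_gt] : exists2 t, P1_upto t & sg - d / 2 < t.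
  by apply: sup_P1_upto_below; lra.
have t_le : t <= sg by apply: sg_ub; split=> //; rewrite t0 t1.
apply: (@P12_disjoint t); first by rewrite t0 t1.
  by apply: P1_upto_t; rewrite t0 lexx.
by apply: P2_near; rewrite ler0_norm; lra.
Qed.

End Supremum.

Lemma unit_interval_connected : False.
Proof.
have [sg [sg_ub sg_least]] : exists sg, (forall t, P1_upto t -> t <= sg) /\
    (forall M, (forall t, P1_upto t -> t <= M) -> sg <= M).
  by apply: hR; [exists 0; apply: P1_upto0 | exists 1 => t [/andP []]].
case: (@P12_cover sg); rewrite ?sup_P1_upto_ge0 ?sup_P1_upto_le1 //.
  exact: sup_P1_upto_not_P1.
exact: sup_P1_upto_not_P2.
Qed.

End UnitIntervalConnected.

Section StarShaped.
Variable R : realFieldType.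
Hypothesis hR : sup_complete R.
Variable n : nat.
Implicit Types (a b c : 'rV[R]_n) (S U : 'rV[R]_n -> Prop).

Definition seg a b (t : R) := (1 - t) *: a + t *: b.

Lemma open_set_seg U a b s : open_set U -> U (seg a b s) ->
  exists2 d : R, 0 < d & forall t, `|t - s| < d -> U (seg a b t).
Proof.
move=> U_open /U_open [e e0 U_near].
pose K := 1 + \sum_i `|b 0 i - a 0 i|.
have K0 : 0 < K by rewrite ltr_wpDr // sumr_ge0 // => i _; exact: normr_ge0.
have Ki i : `|b 0 i - a 0 i| <= K.
  rewrite /K (bigD1 i) //= addrA ler_wpDr ?ler_wpDl //.
  by apply: sumr_ge0 => j _; exact: normr_ge0.
exists (e / K) => [|t]; first exact: divr_gt0.
rewrite ltr_pdivlMr // => ts; apply: U_near => i.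
have -> : seg a b t 0 i - seg a b s 0 i = (t - s) * (b 0 i - a 0 i).
  by rewrite !mxE; ring.
have := Ki i; have := normr_ge0 (t - s); have := normr_ge0 (b 0 i - a 0 i).
by rewrite normrM; nra.
Qed.

Lemma seg_not_separated S U1 U2 a b :
  open_set U1 -> open_set U2 -> (forall x, S x -> U1 x \/ U2 x) ->
  (forall x, ~ (S x /\ U1 x /\ U2 x)) ->
  (forall t, 0 <= t <= 1 -> S (seg a b t)) -> U1 a -> U2 b -> False.
Proof.
move=> U1_open U2_open S_cover S_disj S_seg U1a U2b.
apply: (@unit_interval_connected _ hR (fun t => U1 (seg a b t)) (fun t => U2 (seg a b t))).
- by move=> s; apply: open_set_seg.
- by move=> s; apply: open_set_seg.
- by move=> t /S_seg /S_cover.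
- by move=> t /S_seg St U1t U2t; apply: (S_disj (seg a b t)).
- by rewrite /seg subr0 scale1r scale0r addr0.
- by rewrite /seg subrr scale0r scale1r add0r.
Qed.

Lemma star_connected S c : S c ->
  (forall x, S x -> forall t, 0 <= t <= 1 -> S (seg c x t)) -> connected_set S.
Proof.
move=> Sc S_star U1 U2 U1_open U2_open S_cover S_disj [a [Sa U1a]] [b [Sb U2b]].
case: (S_cover _ Sc) => [U1c | U2c].
  exact: seg_not_separated U1_open U2_open S_cover S_disj (S_star b Sb) U1c U2b.
apply: (seg_not_separated U2_open U1_open _ _ (S_star a Sa) U2c U1a).
  by move=> x /S_cover [] ?; [right | left].
by move=> x [Sx [U2x U1x]]; apply: (S_disj x).
Qed.

End StarShaped.

Section LightconeComponents.
Variable R : realFieldType.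
Hypothesis hR : sup_complete R.
Variables n k l : nat.
Variable B : 'M[R]_n.
Hypothesis hB : pseudo_euclidean B k l.
Hypothesis hk : (2 <= k)%N.
Variable H : 'M[R]_n.
Hypothesis hH : positive_plane B H k.-1.
Implicit Types (w x e : 'rV[R]_n).

Local Notation bf := (bform B).
Local Notation W := (perp B H).
Let Bsym : B^T = B. Proof. by case: hB. Qed.

Lemma lightconeN w : lightcone B W w -> lightcone B W (- w).
Proof.
by case=> [wW [ww w0]]; rewrite /lightcone eqmx_opp bformNl bformNr opprK oppr_eq0.
Qed.

Definition nappe e := fun w => lightcone B W w /\ 0 < bf w e.

Lemma nappe_connected e : (e <= W)%MS -> 0 < bf e e -> connected_set (nappe e).
Proof.
move=> eW ee; apply: (star_connected hR (c := e)).
  by split=> //; split=> //; split; [exact: ltW | exact: (bform_gt0_neq0 ee)].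
move=> x [[xW [xx x0]] xe] t /andP [t0 t1].
have seg_e : 0 < bf (seg e x t) e.
  rewrite bformDl !bformZl; case: (ltP t 1) => [t_lt1 | t_ge1].
    by rewrite ltr_pwDl ?mulr_gt0 ?mulr_ge0 ?subr_gt0 // ltW.
  by rewrite (_ : t = 1) ?subrr ?mul0r ?add0r ?mul1r //; apply/eqP; rewrite eq_le t1.
have seg_ne0 : seg e x t != 0 by apply: contraTneq seg_e => ->; rewrite bform0l ltxx.
split=> //; split; first by apply: addmx_sub; apply: scalemx_sub.
split=> //.
rewrite !bformDl !bformDr !bformZl !bformZr (bformC Bsym x e).
have h1 : 0 <= (1 - t) * (1 - t) * bf e e by rewrite !mulr_ge0 ?subr_ge0 // ltW.
have h2 : 0 <= 2 * ((1 - t) * t) * bf e x by rewrite !mulr_ge0 ?subr_ge0 // bformC // ltW.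
have h3 : 0 <= t * t * bf x x by rewrite !mulr_ge0.
nra.
Qed.

Lemma lightcone_nappe e w : (e <= W)%MS -> 0 < bf e e -> lightcone B W w ->
  nappe e w \/ nappe e (- w).
Proof.
move=> eW ee w_cone; have := lightcone_orth_pos hB hk hH eW ee w_cone.
rewrite (bformC Bsym e w); case: (ltrgtP (bf w e) 0) => [w_neg _ | w_pos _ | //].
  by right; split; [apply: lightconeN | rewrite bformNl oppr_gt0].
by left.
Qed.

Lemma lightcone_componentN C : connected_component (lightcone B W) C ->
  forall w, lightcone B W w -> C w \/ C (- w).
Proof.
case=> [[x Cx] [C_cone [_ C_max]]].
have [e0 e0W e0e0] := perpH_lightcone_pos hB hH (C_cone x Cx).
have [e [eW ee xe]] : exists e, [/\ (e <= W)%MS, 0 < bf e e & 0 < bf x e].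
  case: (lightcone_nappe e0W e0e0 (C_cone x Cx)) => [[_ xe0] | [_ xe0]].
    by exists e0.
  by exists (- e0); rewrite eqmx_opp bformNl bformNr opprK bformNr -bformNl.
have nappe_C y : nappe e y -> C y.
  move=> ey; apply: (C_max (nappe e)) => //; first exact: nappe_connected.
  - by move=> z [].
  - by exists x; split=> //; split=> //; apply: C_cone.
by move=> w /(lightcone_nappe eW ee) [] /nappe_C; [left | right].
Qed.

End LightconeComponents.

Section Extendability.
Variable R : realFieldType.
Variables n k l : nat.
Variable B : 'M[R]_n.
Hypothesis hB : pseudo_euclidean B k l.
Hypothesis hk : (2 <= k)%N.
Variables Z H : 'M[R]_n.
Hypothesis hH : positive_plane B H k.-1.

Local Notation bf := (bform B).
Local Notation W := (perp B H).
Let Bsym : B^T = B. Proof. by case: hB. Qed.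

Lemma orth_extendableP :
  orth_extendable B k Z H <-> exists2 z, (z <= Z :&: W)%MS & 0 < bf z z.
Proof.
split=> [[z [zZW z_ext]] | [z zZW zz]].
  by exists z => //; exact: (positive_plane_addsmx_pos hk hH z_ext).
have zW : (z <= W)%MS := submx_trans zZW (capmxSr _ _).
by exists z; split=> //; exact: (positive_plane_addsmx hB hk hH zW zz).
Qed.

Lemma proj_perpZ_not_lightcone z v : (z <= Z :&: W)%MS -> 0 < bf z z ->
  (v <= perp B Z)%MS -> ~ lightcone B W (v *m proj_mx W H).
Proof.
move=> zZW zz vZ w_cone.
have zW : (z <= W)%MS := submx_trans zZW (capmxSr _ _).
have zv : bf z v = 0 := bform_perpr Bsym (submx_trans zZW (capmxSl _ _)) vZ.
have z_vw : bf z (v - v *m proj_mx W H) = 0 :=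
  bform_perpl zW (proj_perpH_compl hB hH v).
move: z_vw (lightcone_orth_pos hB hk hH zW zz w_cone).
by rewrite bformBr zv sub0r => /eqP; rewrite oppr_eq0 => /eqP ->; rewrite eqxx.
Qed.

End Extendability.

Unset Implicit Arguments. Set Strict Implicit. Set Printing Implicit Defensive.

Theorem lemma3 (R : realFieldType) (hR : sup_complete R)
  (n k l : nat) (B : 'M[R]_n) (hB : pseudo_euclidean B k l)
  (hk : (2 <= k)%N) (hl : (2 <= l)%N)
  (Z H : 'M[R]_n) (hZ : qplus_ge1 B Z)
  (hH : positive_plane B H k.-1)
  (C : 'rV[R]_n -> Prop) (hC : connected_component (lightcone B (perp B H)) C) :
  (orth_extendable B k Z H <-> qplus_ge1 B (Z :&: perp B H)%MS) /\
  (qplus_ge1 B (Z :&: perp B H)%MS <->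
     (forall v : 'rV[R]_n, (v <= perp B Z)%MS -> ~ C (v *m proj_mx (perp B H) H))).
Proof.
have Bsym : B^T = B by case: hB.
have ZW_W : (Z :&: perp B H <= perp B H)%MS by apply: capmxSr.
have [[x Cx] [C_cone _]] := hC.
split; first exact: iff_trans (orth_extendableP hB hk Z hH) (iff_sym (qplus_ge1P hR Bsym _)).
split=> [/(qplus_ge1P hR Bsym) [z zZW zz] v vZ /C_cone | C_avoids].
  exact: (proj_perpZ_not_lightcone hB hk hH zZW zz vZ).
apply/(qplus_ge1P hR Bsym); apply: NNPP => no_pos.
have ZW_npos v : (v <= Z :&: perp B H)%MS -> bform B v v <= 0.
  by move=> vZW; rewrite leNgt; apply/negP => vv; apply: no_pos; exists v.
have [e eW ee] := perpH_lightcone_pos hB hH (C_cone x Cx).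
have [w wZW w_cone] := perpH_nonpos_lightcone_perp hB ZW_W ZW_npos eW ee.
(* Both [w] and [-w] qualify, and one of them lies in [C]. *)
wlog Cw : w wZW w_cone / C w.
  move=> Cw_false; case: (lightcone_componentN hR hB hk hH hC w_cone) => [|CNw].
    exact: Cw_false.
  by apply: (Cw_false (- w)); rewrite ?eqmx_opp //; apply: lightconeN.
have [v vZ vw] := proj_perpH_onto hB hH (proj1 w_cone) wZW.
by apply: (C_avoids v vZ); rewrite vw.
Qed.
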